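(* Let $V$ be a real vector space of finite even dimension with nondegenerate quadratic form $Q$, and let $\sigma$ be an admissible real structure on $\mathbb{C}l(V)$. Let $V_+=V\cap V_\sigma$ and $V_-=V\cap iV_\sigma$. The following are equivalent: (1) $Q$ is positive definite on $V_+$ and negative definite on $V_-$; (2) the quadratic form $Q_\sigma$ on $V$ is positive definite; (3) the restriction of $Q$ to $V_\sigma$ is positive definite; (4) the $\sigma$-product $(\cdot,\cdot)_\sigma$ is positive definite.
   Context: $Cl(V,Q)$ is the real Clifford algebra with $v^2=+Q(v)$, $\mathbb{C}l(V)$ its complexification with complex conjugation $c$, $V^{\mathbb{C}}\subset\mathbb{C}l(V)$, $B$ the bilinear form of $Q$ extended complex-bilinearly. A real structure is an involutive antilinear algebra automorphism of $\mathbb{C}l(V)$ stabilizing $V^{\mathbb{C}}$; it is admissible if it commutes with $c$ (then $V=V_+\oplus V_-$ is a $Q$-orthogonal decomposition). $V_\sigma=\{v\in V^{\mathbb{C}}:\sigma(v)=v\}$; $Q_\sigma(v)=B(\sigma(v),v)$ for $v\in V$. $T$ is the linear antiautomorphism of $\mathbb{C}l(V)$ restricting to the identity on $V$; $\tau_n$ is the normalized trace (the unique linear form with $\tau_n(ab)=\tau_n(ba)$, $\tau_n(1)=1$); the $\sigma$-product is $(a,b)_\sigma=\tau_n(\sigma(T(a))b)$. *)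

From HB Require Import structures.
From mathcomp Require Import all_boot all_order all_algebra all_field.
From mathcomp Require Import complex.
Set Implicit Arguments. Unset Strict Implicit. Unset Printing Implicit Defensive.
Import Order.TTheory GRing.Theory Num.Theory.
Local Open Scope ring_scope.

(* V = R^n (row vectors), its complexification V^C = C^n with C = R[i]. *)
Definition cplx {R : rcfType} {n : nat} (v : 'rV[R]_n) : 'rV[R[i]]_n :=
  map_mx (fun x => x%:C%C) v.

Definition Qform {R : rcfType} {n : nat} (B : 'M[R]_n) (v : 'rV[R]_n) : R :=
  (v *m B *m v^T) 0 0.

(* B extended complex-bilinearly to V^C. *)
Definition Bc {R : rcfType} {n : nat} (B : 'M[R]_n) (u w : 'rV[R[i]]_n) : R[i] :=
  (u *m map_mx (fun x => x%:C%C) B *m w^T) 0 0.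

(* (A, gam) is the complexified Clifford algebra Cl(V,Q) (x) C, with
   gam : V^C -> A the (C-linear) inclusion of V^C, v^2 = +Q(v):
   A is a finite-dim. complex algebra generated by gam(V^C), satisfying the
   Clifford relation and of dimension 2^n (hence isomorphic to the universal
   Clifford algebra). *)
Definition is_cplx_clifford {R : rcfType} {n : nat} (B : 'M[R]_n)
  (A : falgType R[i]) (gam : 'rV[R[i]]_n -> A) : Prop :=
  [/\ (forall (a : R[i]) u w, gam (a *: u + w) = a *: gam u + gam w),
      (forall u, gam u * gam u = (Bc B u u)%:A),
      agenv (<<[seq gam (delta_mx ord0 i) | i <- enum 'I_n]>>)%VS = fullv
    & \dim (fullv : {vspace A}) = (2 ^ n)%N].

Definition antilinear_algmorph {R : rcfType} (A : falgType R[i]) (f : A -> A) : Prop :=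
  [/\ (forall x y, f (x + y) = f x + f y),
      (forall (a : R[i]) x, f (a *: x) = (conjc a) *: f x),
      (forall x y, f (x * y) = f x * f y)
    & f 1 = 1].

(* c : the complex conjugation of Cl(V) (x) C (fixes Cl(V), i.e. fixes V). *)
Definition is_cplx_conj {R : rcfType} {n : nat} (A : falgType R[i])
  (gam : 'rV[R[i]]_n -> A) (c : A -> A) : Prop :=
  [/\ antilinear_algmorph c, involutive c
    & forall v : 'rV[R]_n, c (gam (cplx v)) = gam (cplx v)].

Definition is_real_structure {R : rcfType} {n : nat} (A : falgType R[i])
  (gam : 'rV[R[i]]_n -> A) (s : A -> A) : Prop :=
  [/\ antilinear_algmorph s, involutive s
    & forall u, exists w, s (gam u) = gam w].

Definition admissible {R : rcfType} (A : falgType R[i]) (c s : A -> A) : Prop :=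
  forall x, s (c x) = c (s x).

Definition is_transpose {R : rcfType} {n : nat} (A : falgType R[i])
  (gam : 'rV[R[i]]_n -> A) (T : A -> A) : Prop :=
  [/\ (forall (a : R[i]) x y, T (a *: x + y) = a *: T x + T y),
      (forall x y, T (x * y) = T y * T x), T 1 = 1, bijective T
    & forall v : 'rV[R]_n, T (gam (cplx v)) = gam (cplx v)].

Definition is_normalized_trace {R : rcfType} (A : falgType R[i]) (tau : A -> R[i]) : Prop :=
  [/\ (forall (a : R[i]) x y, tau (a *: x + y) = a * tau x + tau y),
      (forall x y, tau (x * y) = tau (y * x))
    & tau 1 = 1].

Definition in_Vsigma {R : rcfType} {n : nat} (A : falgType R[i])
  (gam : 'rV[R[i]]_n -> A) (s : A -> A) (u : 'rV[R[i]]_n) : Prop :=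
  s (gam u) = gam u.

Definition in_Vplus {R : rcfType} {n : nat} (A : falgType R[i])
  (gam : 'rV[R[i]]_n -> A) (s : A -> A) (v : 'rV[R]_n) : Prop :=
  in_Vsigma gam s (cplx v).

Definition in_Vminus {R : rcfType} {n : nat} (A : falgType R[i])
  (gam : 'rV[R[i]]_n -> A) (s : A -> A) (v : 'rV[R]_n) : Prop :=
  exists w, in_Vsigma gam s w /\ cplx v = 'i%C *: w.

(* Q_sigma(v) = B(sigma(v), v), where sigma(v) = gam w (w unique). *)
Definition Qsigma_posdef {R : rcfType} {n : nat} (B : 'M[R]_n) (A : falgType R[i])
  (gam : 'rV[R[i]]_n -> A) (s : A -> A) : Prop :=
  forall v : 'rV[R]_n, v != 0 ->
    forall w, s (gam (cplx v)) = gam w -> 0 < Bc B w (cplx v).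

Definition sigma_product {R : rcfType} (A : falgType R[i]) (s T : A -> A)
  (tau : A -> R[i]) (a b : A) : R[i] := tau (s (T a) * b).

(** Since σ commutes with c it maps the real space V to itself, and the
    Clifford relation uv + vu = 2B(u,v) gives B(σu,σw) = conj B(u,w).  Hence
    V = V₊ ⊕ V₋ is a B-orthogonal splitting with σ = ±1 on V±, so that
    Q_σ(a + b) = Q(a) - Q(b), and V_σ = V₊ ⊕ iV₋ with
    B(x + iy, x + iy) = Q(x) - Q(y); this gives (1) ⇔ (2) and (1) ⇒ (3).
    For v ∈ V± one has (v,v)_σ = τ(σ(v) v) = ±Q(v), whence (4) ⇒ (1).
    For (3) ⇒ (4), Gram–Schmidt in the real form V_σ yields a B-orthonormal
    basis (e_i) of V^C fixed by σ and T.  The 2^n monomials e_I span Cl(V),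
    σT maps e_I to the reversed product, and for n even the trace of every
    product of the e_i in which some index occurs an odd number of times
    vanishes.  So the e_I are orthonormal for the σ-product and
    (a,a)_σ = Σ |a_I|². *)

From HB Require Import structures.
From mathcomp Require Import all_boot all_order all_algebra all_field.
From mathcomp Require Import complex.
Import Order.TTheory GRing.Theory Num.Theory.
Local Open Scope ring_scope.
Set Implicit Arguments. Unset Strict Implicit. Unset Printing Implicit Defensive.

Lemma size_sum_count_mem (T : finType) (s : seq T) :
  size s = (\sum_(i : T) count_mem i s)%N.
Proof.
elim: s => [|x s IH] /=; first by rewrite big1.
rewrite big_split /= -IH (bigD1 x) //= eqxx big1 // => i.
by rewrite eq_sym => /negPf ->.
Qed.

Lemma odd_count_predC1 (n : nat) (s : seq 'I_n) :
  ~~ odd n -> (exists i, odd (count_mem i s)) -> exists j, odd (count (predC1 j) s).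
Proof.
move=> even_n [i odd_i].
have countC1 j : count (predC1 j) s = (size s - count_mem j s)%N.
  by rewrite -(count_predC (pred1 j) s) addKn.
case/boolP: (odd (size s)) => odd_s; last first.
  by exists i; rewrite countC1 oddB ?count_size // (negPf odd_s) odd_i.
have [j even_j] : exists j, ~~ odd (count_mem j s).
  apply/existsP; apply: contraLR odd_s; rewrite negb_exists => /forallP odd_all.
  have oddE (F : 'I_n -> nat) : odd (\sum_j F j) = \big[addb/false]_j odd (F j).
    exact: (big_morph odd oddD).
  rewrite size_sum_count_mem oddE (eq_bigr (fun=> odd 1)) => [|j _]; last first.
    by have := odd_all j; rewrite negbK.
  by rewrite -oddE sum1_card card_ord (negPf even_n).
by exists j; rewrite countC1 oddB ?count_size // odd_s (negPf even_j).
Qed.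

Section CliffordMonomials.
Variables (R : rcfType) (A : falgType R[i]) (n : nat) (f : 'I_n -> A).
Variables (tau : A -> R[i]) (s T : A -> A).
Hypothesis even_n : ~~ odd n.
Hypothesis dimA : \dim (fullv : {vspace A}) = (2 ^ n)%N.
Hypothesis f_sqr : forall i, f i * f i = 1.
Hypothesis f_anticomm : forall i j, i != j -> f i * f j = - (f j * f i).
Hypothesis tauL : forall (a : R[i]) x y, tau (a *: x + y) = a * tau x + tau y.
Hypothesis tauC : forall x y, tau (x * y) = tau (y * x).
Hypothesis tau1 : tau 1 = 1.
Hypothesis TL : forall (a : R[i]) x y, T (a *: x + y) = a *: T x + T y.
Hypothesis TM : forall x y, T (x * y) = T y * T x.
Hypothesis T1 : T 1 = 1.
Hypothesis T_f : forall i, T (f i) = f i.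
Hypothesis sD : forall x y, s (x + y) = s x + s y.
Hypothesis sZ : forall (a : R[i]) x, s (a *: x) = a^*%C *: s x.
Hypothesis sM : forall x y, s (x * y) = s x * s y.
Hypothesis s1 : s 1 = 1.
Hypothesis s_f : forall i, s (f i) = f i.

HB.instance Definition _ := GRing.isLinear.Build R[i] A R[i]^o *%R tau tauL.
HB.instance Definition _ := GRing.isLinear.Build R[i] A A *:%R T TL.
HB.instance Definition _ := GRing.isSemilinear.Build R[i] A A (conjc \; *:%R) s (sZ, sD).
HB.instance Definition _ := GRing.isMultiplicative.Build A A s (sM, s1).

Local Notation word l := (\prod_(i <- l) f i).

Lemma commute_word j l :
  f j * word l = (-1) ^+ count (predC1 j) l *: (word l * f j).
Proof.
elim: l => [|x l IH]; first by rewrite big_nil mulr1 mul1r scale1r.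
rewrite !big_cons /=.
case: (eqVneq x j) => [->|neq_xj].
  by rewrite /= add0n [in LHS]IH -scalerAr !mulrA.
rewrite mulrA f_anticomm 1?eq_sym // mulNr -[in LHS]mulrA IH -scalerAr mulrA /=.
by rewrite add1n exprS mulN1r scaleNr.
Qed.

Lemma trace_anticomm j x : f j * x = - (x * f j) -> tau x = 0.
Proof.
move=> anti; have: tau x *+ 2 == 0.
  rewrite mulr2n addr_eq0 -{1}[x]mul1r -(f_sqr j) -mulrA tauC anti mulNr.
  by rewrite -mulrA f_sqr mulr1 raddfN.
by rewrite mulrn_eq0 => /eqP.
Qed.

(* For odd n this fails: the product of all the f i is then central. *)
Lemma trace_word_odd_count l :
  (exists i, odd (count_mem i l)) -> tau (word l) = 0.
Proof.
move=> /(odd_count_predC1 even_n) [j odd_j]; apply: (@trace_anticomm j).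
by rewrite commute_word -signr_odd odd_j scaleN1r.
Qed.

Lemma word_rev_cat l : word (rev l ++ l) = 1.
Proof.
elim: l => [|x l IH]; first by rewrite big_nil.
by rewrite rev_cons cat_rcons big_cat !big_cons /= [f x * _]mulrA f_sqr mul1r -big_cat.
Qed.

Definition monomial (I : {set 'I_n}) : A := word (enum I).
Definition dual_monomial (I : {set 'I_n}) : A := word (rev (enum I)).

Lemma trace_dual_monomial (I J : {set 'I_n}) :
  tau (dual_monomial I * monomial J) = (I == J)%:R.
Proof.
rewrite -big_cat /=; have [<-|neq_IJ] := eqVneq I J.
  by rewrite word_rev_cat tau1.
have [j jIJ] : exists j, (j \in I) != (j \in J).
  apply/existsP; move: neq_IJ; apply: contraNT => /existsPn eqIJ.
  by apply/eqP/setP => j; apply/eqP/negbNE/eqIJ.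
apply: trace_word_odd_count; exists j.
rewrite count_cat count_rev !count_uniq_mem ?enum_uniq // !mem_enum.
by case: (j \in I) (j \in J) jIJ => [] [].
Qed.

Local Notation N := #|{set 'I_n}|.

Definition monomials : N.-tuple A := [tuple monomial (enum_val k) | k < N].

Lemma trace_dual_monomial_sum (c : 'I_N -> R[i]) k :
  tau (dual_monomial (enum_val k) * \sum_l c l *: monomials`_l) = c k.
Proof.
rewrite mulr_sumr raddf_sum (bigD1 k) //= big1 => [|l neq_lk].
  by rewrite -scalerAr linearZ /= nth_mktuple trace_dual_monomial eqxx mulr1 addr0.
rewrite -scalerAr linearZ /= nth_mktuple trace_dual_monomial (inj_eq enum_val_inj).
by rewrite eq_sym (negPf neq_lk) mulr0.
Qed.

Lemma monomials_basis : basis_of fullv monomials.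
Proof.
have card_sets : (2 ^ n <= N)%N by rewrite -cardsT -powersetT card_powerset cardsT card_ord.
rewrite basisEfree subvf dimA size_tuple card_sets !andbT.
apply/freeP => c sum0 k.
by rewrite -(trace_dual_monomial_sum c k) sum0 mulr0 raddf0.
Qed.

Lemma T_word l : T (word l) = word (rev l).
Proof.
elim: l => [|x l IH]; first by rewrite big_nil T1.
by rewrite big_cons TM IH T_f rev_cons -cats1 big_cat big_seq1.
Qed.

Lemma sigma_T_monomial I : s (T (monomial I)) = dual_monomial I.
Proof.
by rewrite /monomial T_word rmorph_prod; exact: eq_bigr => i _.
Qed.

Lemma sigma_product_gt0 a : a != 0 -> 0 < tau (s (T a) * a).
Proof.
move=> nz_a; have [c a_dec] : exists c : 'I_N -> R[i], a = \sum_k c k *: monomials`_k.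
  by exists (coord monomials ^~ a); apply: coord_basis monomials_basis (memvf a).
have -> : s (T a) = \sum_k (c k)^*%C *: dual_monomial (enum_val k).
  rewrite a_dec linear_sum raddf_sum; apply: eq_bigr => k _.
  by rewrite nth_mktuple /= linearZZ sZ sigma_T_monomial.
rewrite mulr_suml raddf_sum (eq_bigr (fun k => c k * (c k)^*%C)) => [|k _]; last first.
  by rewrite -scalerAl /= linearZ /= a_dec trace_dual_monomial_sum mulrC.
rewrite lt0r sumr_ge0 ?andbT => [|k _]; last exact: mul_conjC_ge0.
move: nz_a; apply: contra => /eqP sum0; rewrite a_dec big1 // => k _.
have /eqP := psumr_eq0P (fun k _ => mul_conjC_ge0 (c k)) sum0 (i := k) isT.
by rewrite mul_conjC_eq0 => /eqP ->; rewrite scale0r.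
Qed.
End CliffordMonomials.

Section ComplexifiedForm.
Variables (R : rcfType) (n : nat) (B : 'M[R]_n).
Hypothesis Bsym : B^T = B.
Local Notation Bc := (Bc B).

Lemma BcDl u v w : Bc (u + v) w = Bc u w + Bc v w.
Proof. by rewrite /Bc !mulmxDl mxE. Qed.

Lemma BcZl a u w : Bc (a *: u) w = a * Bc u w.
Proof. by rewrite /Bc -!scalemxAl mxE. Qed.

Lemma Bc_sym u w : Bc u w = Bc w u.
Proof.
have entry_tr (M : 'M[R[i]]_1) : M 0 0 = M^T 0 0 by rewrite mxE.
by rewrite /Bc [LHS]entry_tr !trmx_mul trmxK map_trmx Bsym mulmxA.
Qed.

Lemma BcDr u v w : Bc u (v + w) = Bc u v + Bc u w.
Proof. by rewrite !(Bc_sym u) BcDl. Qed.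

Lemma BcZr a u w : Bc u (a *: w) = a * Bc u w.
Proof. by rewrite !(Bc_sym u) BcZl. Qed.

Lemma Bc_suml (I : Type) (r : seq I) (P : pred I) (F : I -> 'rV[R[i]]_n) w :
  Bc (\sum_(i <- r | P i) F i) w = \sum_(i <- r | P i) Bc (F i) w.
Proof.
by apply: (big_morph (Bc ^~ w) (fun u v => BcDl u v w)); rewrite -(scale0r 0) BcZl mul0r.
Qed.

Lemma Bc_nondegen u : \det B != 0 -> (forall w, Bc u w = 0) -> u = 0.
Proof.
move=> detB u_orth; set Bi := map_mx (fun x => x%:C%C) B.
have uB0 : u *m Bi = 0.
  by apply/rowP => j; have := u_orth (delta_mx 0 j); rewrite /Bc trmx_delta -colE !mxE.
have unit_Bi : Bi \in unitmx.
  by rewrite unitmxE (det_map_mx (real_complex R)) unitfE; apply: contra detB => /eqP [] ->.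
by rewrite -(mulmxK unit_Bi u) uB0 mul0mx.
Qed.

Lemma Bc_cplx x y : Bc (cplx x) (cplx y) = ((x *m B *m y^T) 0 0)%:C%C.
Proof. by rewrite /Bc /cplx map_trmx -!map_mxM mxE. Qed.

Lemma Bc_cplxQ v : Bc (cplx v) (cplx v) = (Qform B v)%:C%C.
Proof. exact: Bc_cplx. Qed.

Lemma Bc_sub_add u w : Bc (u - w) (u + w) = Bc u u - Bc w w.
Proof.
by rewrite -scaleN1r BcDl !BcDr !BcZl (Bc_sym w u) !mulN1r addrA addrK.
Qed.

Lemma Bc_add_orth u w a : Bc u w = 0 ->
  Bc (u + a *: w) (u + a *: w) = Bc u u + a ^+ 2 * Bc w w.
Proof.
move=> uw0; rewrite BcDl !BcDr !BcZl !BcZr (Bc_sym w u) uw0.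
by rewrite !mulr0 addr0 add0r mulrA -expr2.
Qed.
End ComplexifiedForm.

Lemma cplx_is_zmod_morphism (R : rcfType) (n : nat) : zmod_morphism (@cplx R n).
Proof. by move=> x y; apply/rowP => j; rewrite !mxE rmorphB. Qed.

HB.instance Definition _ (R : rcfType) (n : nat) :=
  GRing.isZmodMorphism.Build _ _ (@cplx R n) (@cplx_is_zmod_morphism R n).

Section ComplexVectors.
Variables (R : rcfType) (n : nat).
Implicit Types (x y : 'rV[R]_n) (u : 'rV[R[i]]_n).

Lemma cplxZ (r : R) x : cplx (r *: x) = r%:C%C *: cplx x.
Proof. by apply/rowP => j; rewrite !mxE rmorphM. Qed.

Lemma cplx_inj : injective (@cplx R n).
Proof. by move=> x y /rowP xy; apply/rowP => j; have := xy j; rewrite !mxE => -[]. Qed.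

Lemma cplx_ReIm u :
  u = cplx (map_mx (@complex.Re R) u) + 'i%C *: cplx (map_mx (@complex.Im R) u).
Proof. by apply/rowP => j; rewrite !mxE [LHS]complexE. Qed.

Lemma cplx_ReIm_inj x y x' y' :
  cplx x + 'i%C *: cplx y = cplx x' + 'i%C *: cplx y' -> x = x' /\ y = y'.
Proof.
have entry (p q : R) : p%:C%C + 'i%C * q%:C%C = (p +i* q)%C by simpc.
by move=> /rowP E; split; apply/rowP => j; have := E j; rewrite !mxE !entry => -[].
Qed.
End ComplexVectors.

Section OrthonormalFrame.
Variables (R : rcfType) (n : nat) (B : 'M[R]_n) (W : 'rV[R[i]]_n -> Prop).
Hypothesis Bsym : B^T = B.
Hypothesis W_add : forall u v, W u -> W v -> W (u + v).
Hypothesis W_scale : forall a u, a^*%C = a -> W u -> W (a *: u).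
Hypothesis W_span : forall v, exists x y, [/\ W x, W y & v = x + 'i%C *: y].
Hypothesis Bc_real : forall u v, W u -> W v -> (Bc B u v)^*%C = Bc B u v.
Hypothesis Bc_posdef : forall u, u != 0 -> W u -> 0 < Bc B u u.

Local Notation Bc := (Bc B).

Lemma W_sub u v : W u -> W v -> W (u - v).
Proof. by move=> Wu Wv; rewrite -scaleN1r; apply/W_add/W_scale; rewrite // rmorphN1. Qed.

Lemma W_sum k (F : 'I_k -> 'rV[R[i]]_n) : (forall j, W (F j)) -> W (\sum_j F j).
Proof.
move=> WF; have [x [_ [Wx _ _]]] := W_span 0.
elim/big_ind: _ => [|u v|j _]; last exact: WF; last exact: W_add.
by rewrite -(subrr x); apply: W_sub.
Qed.

Lemma exists_W_notin_span (es : seq 'rV[R[i]]_n) :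
  (size es < n)%N -> exists2 u, W u & u \notin <<es>>%VS.
Proof.
move=> small_es; have : ~~ (fullv <= <<es>>)%VS.
  apply: contraL small_es => /dimvS; rewrite dimvf /dim /= mul1n -leqNgt => le_n.
  exact: leq_trans le_n (dim_span es).
case/subvPn => v _; have [x [y [Wx Wy ->]]] := W_span v => xy_notin.
case/boolP: (x \in <<es>>%VS) => [x_in|]; last by exists x.
by exists y => //; apply: contra xy_notin => y_in; apply: memvD x_in (memvZ _ y_in).
Qed.

Lemma exists_unit_orthogonal (es : seq 'rV[R[i]]_n) :
  (size es < n)%N -> (forall u, u \in es -> W u) ->
  (forall i j, (i < size es)%N -> (j < size es)%N -> Bc es`_i es`_j = (i == j)%:R) ->
  exists e, [/\ W e, Bc e e = 1 & forall i, (i < size es)%N -> Bc e es`_i = 0].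
Proof.
move=> small_es W_es on_es; have [u Wu u_notin] := exists_W_notin_span small_es.
pose u' := u - \sum_(j < size es) Bc u es`_j *: es`_j.
have W_esj (j : 'I_(size es)) : W es`_j by apply/W_es/mem_nth.
have Wu' : W u'.
  by apply/W_sub/W_sum => // j; apply/W_scale/W_esj/Bc_real.
have u'_orth i : (i < size es)%N -> Bc u' es`_i = 0.
  move=> lt_i; rewrite BcDl -scaleN1r BcZl Bc_suml (bigD1 (Ordinal lt_i)) //=.
  rewrite BcZl on_es // eqxx mulr1.
  rewrite big1 ?addr0 ?mulN1r ?subrr // => j neq_ji; rewrite BcZl on_es //.
  by rewrite -val_eqE /= in neq_ji; rewrite (negPf neq_ji) mulr0.
have nz_u' : u' != 0.
  apply: contra u_notin; rewrite subr_eq0 => /eqP ->.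
  by apply: memv_suml => j _; apply/memvZ/memv_span/mem_nth.
set t := (sqrtC (Bc u' u'))^-1.
have u'_pos := Bc_posdef nz_u' Wu'.
have t_real : t^*%C = t by apply/conj_Creal/ger0_real; rewrite invr_ge0 sqrtC_ge0 ltW.
exists (t *: u'); split; first exact: W_scale.
  rewrite BcZl (BcZr Bsym) mulrA -expr2 exprVn sqrtCK mulVf //; exact: lt0r_neq0.
by move=> i lt_i; rewrite BcZl u'_orth // mulr0.
Qed.

Lemma exists_orthonormal_frame : exists e : 'I_n -> 'rV[R[i]]_n,
  (forall i, W (e i)) /\ (forall i j, Bc (e i) (e j) = (i == j)%:R).
Proof.
have frame k : (k <= n)%N -> exists es : seq 'rV[R[i]]_n, [/\ size es = k,
    forall u, u \in es -> W u &
    forall i j, (i < k)%N -> (j < k)%N -> Bc es`_i es`_j = (i == j)%:R].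
  elim: k => [|k IH] le_kn; first by exists [::].
  have [es [size_es W_es on_es]] := IH (ltnW le_kn).
  rewrite -size_es in on_es le_kn.
  have [e [We ee e_orth]] := exists_unit_orthogonal le_kn W_es on_es.
  exists (e :: es); split => [|u|[|i] [|j] //= lt_i lt_j].
  - by rewrite /= size_es.
  - by rewrite inE => /orP [/eqP ->|/W_es].
  - by apply: e_orth; rewrite size_es.
  - by rewrite Bc_sym // e_orth // size_es.
  - by apply: on_es; rewrite size_es.
have [es [size_es W_es on_es]] := frame n (leqnn n).
exists (fun i => es`_i); split => [i|i j]; last exact: on_es.
by apply/W_es/mem_nth; rewrite size_es.
Qed.
End OrthonormalFrame.

Lemma half_sum_diff (K : numFieldType) (V : lmodType K) (v w : V) :
  2^-1 *: (v + w) + 2^-1 *: (v - w) = v /\ 2^-1 *: (v + w) - 2^-1 *: (v - w) = w.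
Proof.
have half2 (x : V) : 2^-1 *: (x + x) = x.
  by rewrite -mulr2n -scaler_nat scalerA mulVf ?pnatr_eq0 // scale1r.
rewrite -scalerDr -scalerBr opprB [w - v]addrC.
by split; rewrite addrACA subrr ?addr0 ?add0r half2.
Qed.

Lemma ltc0R (R : rcfType) (x : R) : (0 < x%:C%C) = (0 < x).
Proof. exact: ltcR. Qed.

Lemma conjc_i (R : rcfType) : ('i%C)^*%C = - 'i%C :> R[i].
Proof. exact: conjCi. Qed.

Section RealStructure.
Variables (R : rcfType) (n : nat) (B : 'M[R]_n) (A : falgType R[i]).
Variables (gam : 'rV[R[i]]_n -> A) (c s T : A -> A) (tau : A -> R[i]).
Hypotheses (Bsym : B^T = B) (detB : \det B != 0).
Hypothesis gL : forall (a : R[i]) u w, gam (a *: u + w) = a *: gam u + gam w.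
Hypothesis gam_sqr : forall u, gam u * gam u = (Bc B u u)%:A.
Hypothesis cD : forall x y, c (x + y) = c x + c y.
Hypothesis cZ : forall (a : R[i]) x, c (a *: x) = a^*%C *: c x.
Hypothesis c_cplx : forall v : 'rV[R]_n, c (gam (cplx v)) = gam (cplx v).
Hypothesis sD : forall x y, s (x + y) = s x + s y.
Hypothesis sZ : forall (a : R[i]) x, s (a *: x) = a^*%C *: s x.
Hypothesis sM : forall x y, s (x * y) = s x * s y.
Hypothesis s1 : s 1 = 1.
Hypothesis sK : involutive s.
Hypothesis s_gam : forall u, exists w, s (gam u) = gam w.
Hypothesis sc : forall x, s (c x) = c (s x).
Hypothesis TL : forall (a : R[i]) x y, T (a *: x + y) = a *: T x + T y.
Hypothesis TM : forall x y, T (x * y) = T y * T x.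
Hypothesis T1 : T 1 = 1.
Hypothesis T_cplx : forall v : 'rV[R]_n, T (gam (cplx v)) = gam (cplx v).
Hypothesis tauL : forall (a : R[i]) x y, tau (a *: x + y) = a * tau x + tau y.
Hypothesis tauC : forall x y, tau (x * y) = tau (y * x).
Hypothesis tau1 : tau 1 = 1.
Hypotheses (even_n : ~~ odd n) (dimA : \dim (fullv : {vspace A}) = (2 ^ n)%N).

HB.instance Definition _ := GRing.isLinear.Build R[i] _ A *:%R gam gL.
HB.instance Definition _ := GRing.isSemilinear.Build R[i] A A (conjc \; *:%R) c (cZ, cD).
HB.instance Definition _ := GRing.isSemilinear.Build R[i] A A (conjc \; *:%R) s (sZ, sD).
HB.instance Definition _ := GRing.isMultiplicative.Build A A s (sM, s1).
HB.instance Definition _ := GRing.isLinear.Build R[i] A A *:%R T TL.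
HB.instance Definition _ := GRing.isLinear.Build R[i] A R[i]^o *%R tau tauL.

Local Notation Bc := (Bc B).
Local Notation Vsigma := (in_Vsigma gam s).
Local Notation Vplus := (in_Vplus gam s).
Local Notation Vminus := (in_Vminus gam s).

Lemma gam_polar u w : gam u * gam w + gam w * gam u = (Bc u w *+ 2)%:A.
Proof.
have := gam_sqr (u + w).
rewrite linearD /= mulrDl !mulrDr !gam_sqr BcDl !(BcDr Bsym) (Bc_sym Bsym w u) !scalerDl.
rewrite !addrA => /addIr; rewrite -!addrA => /addrI ->.
by rewrite -scalerDl -mulr2n.
Qed.

Lemma gam_inj : injective gam.
Proof.
move=> u w /eqP; rewrite -subr_eq0 -linearB => /eqP gam_uw0; apply/eqP; rewrite -subr_eq0.
apply/eqP/(Bc_nondegen detB) => z; have := gam_polar (u - w) z.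
rewrite gam_uw0 mul0r mulr0 addr0 => /esym/eqP.
by rewrite scaler_eq0 oner_eq0 orbF mulrn_eq0 => /eqP.
Qed.

Lemma gam_cplx_neq0 v : v != 0 -> gam (cplx v) != 0.
Proof. by apply: contra => /eqP gv0; apply/eqP/cplx_inj/gam_inj; rewrite gv0 !raddf0. Qed.

Lemma c_gam u : c (gam u) = gam (map_mx conjc u).
Proof.
rewrite {1}[u]cplx_ReIm linearD /= linearZZ raddfD /= cZ !c_cplx -linearZZ -linearD /=.
by congr gam; apply/rowP => j; rewrite !mxE; case: (u 0 j) => a b; simpc.
Qed.

Lemma gam_c_fixed w : c (gam w) = gam w -> w = cplx (map_mx (@complex.Re R) w).
Proof.
rewrite c_gam => /gam_inj /rowP wJ; apply/rowP => j; have := wJ j; rewrite !mxE.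
by case: (w 0 j) => a b [] /eqP; rewrite eqNr => /eqP ->.
Qed.

Lemma sigma_cplx v : exists p, s (gam (cplx v)) = gam (cplx p).
Proof.
have [w sv] := s_gam (cplx v); exists (map_mx (@complex.Re R) w).
by rewrite sv -gam_c_fixed // -sv -sc c_cplx.
Qed.

Lemma sigma_Bc u u' w w' : s (gam u) = gam u' -> s (gam w) = gam w' ->
  Bc u' w' = (Bc u w)^*%C.
Proof.
move=> su sw; have := congr1 s (gam_polar u w).
rewrite raddfD /= !rmorphM /= su sw gam_polar sZ s1.
by move/(fmorph_inj (in_alg A))/eqP; rewrite rmorphMn eqrMn2r => /eqP.
Qed.

Lemma in_VminusE v : Vminus v <-> s (gam (cplx v)) = - gam (cplx v).
Proof.
split=> [[w [sw ->]]|sv].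
  by rewrite linearZZ sZ sw conjc_i scaleNr.
exists ((- 'i%C) *: cplx v); split.
  by rewrite /in_Vsigma scaleNr !raddfN /= linearZZ sZ sv conjc_i scalerN scaleNr opprK.
by rewrite scalerA mulrN -expr2 sqr_i opprK scale1r.
Qed.

Lemma Bc_Vplus_Vminus a b : Vplus a -> Vminus b -> Bc (cplx a) (cplx b) = 0.
Proof.
move=> sa /in_VminusE sb; have sb' : s (gam (cplx b)) = gam ((-1) *: cplx b).
  by rewrite linearZZ scaleN1r.
have := sigma_Bc sa sb'.
by rewrite BcZr // mulN1r Bc_cplx conjc_real -Bc_cplx => /eqP; rewrite eqNr => /eqP.
Qed.

Lemma Vplus_Vminus_decomp v : exists a b,
  [/\ Vplus a, Vminus b, v = a + b & s (gam (cplx v)) = gam (cplx (a - b))].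
Proof.
have [p sv] := sigma_cplx v; have sp : s (gam (cplx p)) = gam (cplx v) by rewrite -sv sK.
have [vE pE] := half_sum_diff v p.
exists (2^-1 *: (v + p)), (2^-1 *: (v - p)); split; rewrite ?vE ?pE //.
  by rewrite /in_Vplus /in_Vsigma cplxZ linearZZ sZ conjc_real !raddfD /= sv sp addrC.
apply/in_VminusE.
by rewrite cplxZ linearZZ sZ conjc_real !raddfB /= sv sp opprK addrC.
Qed.

Lemma Vsigma_decomp u : Vsigma u ->
  exists x y, [/\ Vplus x, Vminus y & u = cplx x + 'i%C *: cplx y].
Proof.
move=> su; have uE := cplx_ReIm u; set x := map_mx _ u in uE; set y := map_mx _ u in uE.
have [p sx] := sigma_cplx x; have [q sy] := sigma_cplx y.
have : cplx p + 'i%C *: cplx (- q) = cplx x + 'i%C *: cplx y.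
  apply: gam_inj; rewrite -uE -su [in RHS]uE !linearD /= !linearZZ /= sZ sx sy conjc_i.
  by rewrite !raddfN /= scaleNr.
case/cplx_ReIm_inj => px qy; exists x, y; split => //.
  by rewrite /in_Vplus /in_Vsigma sx px.
by apply/in_VminusE; rewrite sy -qy !raddfN /= opprK.
Qed.

Definition Vpm_definite :=
  (forall v, v != 0 -> Vplus v -> 0 < Qform B v) /\
  (forall v, v != 0 -> Vminus v -> Qform B v < 0).

Lemma Qform_sub_gt0 a b : Vpm_definite -> Vplus a -> Vminus b ->
  (a != 0) || (b != 0) -> 0 < Qform B a - Qform B b.
Proof.
case=> pos neg Va Vb nz_ab; rewrite subr_gt0.
have Q0 : Qform B 0 = 0 by rewrite /Qform !mul0mx mxE.
have Qa : 0 <= Qform B a by have [->|nz_a] := eqVneq a 0; [rewrite Q0 | exact/ltW/pos].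
have Qb : Qform B b <= 0 by have [->|nz_b] := eqVneq b 0; [rewrite Q0 | exact/ltW/neg].
case/orP: nz_ab => [nz_a|nz_b]; first exact: le_lt_trans Qb (pos a _ _).
exact: lt_le_trans (neg b _ _) Qa.
Qed.

Lemma Qsigma_posdef_of_Vpm_definite : Vpm_definite -> Qsigma_posdef B gam s.
Proof.
move=> def v nz_v w sv; have [a [b [Va Vb vE]]] := Vplus_Vminus_decomp v.
rewrite sv => /gam_inj ->; rewrite vE raddfB raddfD /= Bc_sub_add // !Bc_cplxQ -rmorphB ltc0R.
apply: Qform_sub_gt0 => //; apply: contraNT nz_v; rewrite negb_or !negbK.
by case/andP => /eqP a0 /eqP b0; rewrite vE a0 b0 addr0.
Qed.

Lemma Vpm_definite_of_Qsigma_posdef : Qsigma_posdef B gam s -> Vpm_definite.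
Proof.
move=> Qs; split=> v nz_v.
  by move=> Vv; have := Qs v nz_v _ Vv; rewrite Bc_cplxQ ltc0R.
move/in_VminusE => sv; have := Qs v nz_v ((-1) *: cplx v).
rewrite linearZZ scaleN1r => /(_ sv).
by rewrite BcZl mulN1r Bc_cplxQ -rmorphN ltc0R oppr_gt0.
Qed.

Lemma Vsigma_posdef_of_Vpm_definite : Vpm_definite ->
  forall u, u != 0 -> Vsigma u -> 0 < Bc u u.
Proof.
move=> def u nz_u /Vsigma_decomp [x [y [Vx Vy uE]]].
rewrite uE Bc_add_orth ?(Bc_Vplus_Vminus Vx Vy) // sqr_i mulN1r !Bc_cplxQ -rmorphB ltc0R.
apply: Qform_sub_gt0 => //; apply: contraNT nz_u; rewrite negb_or !negbK.
by case/andP => /eqP x0 /eqP y0; rewrite uE x0 y0 raddf0 scaler0 addr0.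
Qed.

Lemma trace_scalar k : tau k%:A = k.
Proof. by rewrite linearZ /= tau1 mulr1. Qed.

Lemma Vpm_definite_of_sigma_product_posdef :
  (forall a, a != 0 -> 0 < sigma_product s T tau a a) -> Vpm_definite.
Proof.
move=> pos; split=> v nz_v V_v; have := pos _ (gam_cplx_neq0 nz_v).
  by rewrite /sigma_product T_cplx V_v gam_sqr trace_scalar Bc_cplxQ ltc0R.
move/in_VminusE: V_v; rewrite /sigma_product T_cplx => ->.
by rewrite mulNr raddfN /= gam_sqr trace_scalar Bc_cplxQ -rmorphN ltc0R oppr_gt0.
Qed.

Lemma T_gam u : T (gam u) = gam u.
Proof. by rewrite [u]cplx_ReIm linearD linearZZ /= linearD linearZZ /= !T_cplx. Qed.

Lemma Vsigma_add u w : Vsigma u -> Vsigma w -> Vsigma (u + w).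
Proof. by rewrite /in_Vsigma linearD /= sD => -> ->. Qed.

Lemma Vsigma_scale a u : a^*%C = a -> Vsigma u -> Vsigma (a *: u).
Proof. by rewrite /in_Vsigma linearZZ sZ => -> ->. Qed.

Lemma Vsigma_span v : exists x y, [/\ Vsigma x, Vsigma y & v = x + 'i%C *: y].
Proof.
have [w sv] := s_gam v; have sw : s (gam w) = gam v by rewrite -sv sK.
have half_real : (2^-1 : R[i])^*%C = 2^-1 by rewrite conjc_inv conjc_nat.
have s_wv : s (gam (w - v)) = - gam (w - v) by rewrite linearB /= raddfB /= sv sw opprB.
exists (2^-1 *: (v + w)), (2^-1 *: ('i%C *: (w - v))); split.
- by apply: Vsigma_scale => //; rewrite /in_Vsigma linearD /= sD sv sw addrC.
- apply: Vsigma_scale => //; rewrite /in_Vsigma linearZZ sZ s_wv conjc_i.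
  by rewrite scaleNr scalerN opprK.
- by rewrite !scalerA mulrAC -expr2 sqr_i mulN1r scaleNr -scalerN opprB (half_sum_diff v w).1.
Qed.

Lemma Vsigma_Bc_real u w : Vsigma u -> Vsigma w -> (Bc u w)^*%C = Bc u w.
Proof. by move=> su sw; rewrite -(sigma_Bc su sw). Qed.

Lemma sigma_product_posdef_of_Vsigma_posdef :
  (forall u, u != 0 -> Vsigma u -> 0 < Bc u u) ->
  forall a, a != 0 -> 0 < sigma_product s T tau a a.
Proof.
move=> pos; have [e [We e_on]] := exists_orthonormal_frame Bsym Vsigma_add Vsigma_scale
  Vsigma_span Vsigma_Bc_real pos.
move=> a; apply: (@sigma_product_gt0 R A n (gam \o e) tau s T) => //= [i|i j neq_ij|i].
- by rewrite gam_sqr e_on eqxx scale1r.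
- apply/eqP; rewrite -addr_eq0 gam_polar e_on.
  by rewrite (negPf neq_ij) mul0rn scale0r.
- exact: T_gam.
Qed.

End RealStructure.

Theorem proposition6 (R : rcfType) (n : nat) (B : 'M[R]_n)
  (A : falgType R[i]) (gam : 'rV[R[i]]_n -> A)
  (c sigma T : A -> A) (tau : A -> R[i]) :
  ~~ odd n -> B^T = B -> \det B != 0 ->
  is_cplx_clifford B gam ->
  is_cplx_conj gam c ->
  is_real_structure gam sigma -> admissible c sigma ->
  is_transpose gam T ->
  is_normalized_trace tau ->
  [<-> (* (1) *)
       (forall v : 'rV[R]_n, v != 0 -> in_Vplus gam sigma v -> 0 < Qform B v) /\
       (forall v : 'rV[R]_n, v != 0 -> in_Vminus gam sigma v -> Qform B v < 0);
       (* (2) *)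
       Qsigma_posdef B gam sigma;
       (* (3) *)
       (forall u : 'rV[R[i]]_n, u != 0 -> in_Vsigma gam sigma u -> 0 < Bc B u u);
       (* (4) *)
       (forall a : A, a != 0 -> 0 < sigma_product sigma T tau a a)].
Proof.
move=> even_n Bsym detB [gL gam_sqr _ dimA] [[cD cZ _ _] _ c_cplx].
move=> [[sD sZ sM s1] sK s_gam] sc [TL TM T1 _ T_cplx] [tauL tauC tau1].
tfae.
- exact: (Qsigma_posdef_of_Vpm_definite (c := c)).
- move=> /(Vpm_definite_of_Qsigma_posdef gL sD sZ) def.
  exact: (Vsigma_posdef_of_Vpm_definite (c := c)).
- exact: sigma_product_posdef_of_Vsigma_posdef.
- exact: Vpm_definite_of_sigma_product_posdef.
Qed.
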